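(* Let $G$ be a group, $\mathbb{F}$ a field, and $\mathsf{a},\mathsf{b}\in\mathbb{F}[G]$ with $|supp(\mathsf{a})|=n$ and $\mathsf{a}\mathsf{b}=1$. Then every vertex of $U(\mathsf{a},\mathsf{b})$ has degree in $\{n-1,n,\dots,n(n-1)\}$. Moreover, $U(\mathsf{a},\mathsf{b})$ has at most one vertex of degree $n-1$.
   Context: $supp(\gamma)=\{x\in G:\gamma_x\ne0\}$. The unit graph $U(\mathsf{a},\mathsf{b})$ (for $\mathsf{a}\mathsf{b}=1$) is the multigraph with vertex set $supp(\mathsf{b})$ whose edges are the sets $\{(h,h',g,g'),(h',h,g',g)\}$ with $h,h'\in supp(\mathsf{a})$, $g,g'\in supp(\mathsf{b})$, $g\ne g'$, $hg=h'g'$; such an edge joins $g$ and $g'$. The degree of a vertex is the number of edges incident to it. *)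

From HB Require Import structures.
From mathcomp Require Import all_boot all_algebra monoid.
From mathcomp Require Import finmap.

Set Implicit Arguments.
Unset Strict Implicit.
Unset Printing Implicit Defensive.

Local Open Scope fset_scope.

Section UnitGraph.
Variables (G : groupType) (F : fieldType).

Definition grpalg := {fsfun G -> F with 0%R}.

Definition supp (x : grpalg) : {fset G} := finsupp x.

Definition gconv (a b : grpalg) (x : G) : F :=
  (\sum_(h <- supp a) \sum_(k <- supp b | monoid.mul h k == x) a h * b k)%R.

Definition galg1 (x : G) : F := if x == monoid.one then 1%R else 0%R.

Definition galg_inverse (a b : grpalg) : Prop := forall x, gconv a b x = galg1 x.

Definition ugquads (a b : grpalg) : seq (G * G * G * G) :=
  [seq q <- [seq (hh.1, hh.2, gg.1, gg.2)
          | hh <- [seq (h, h') | h <- enum_fset (supp a), h' <- enum_fset (supp a)],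
            gg <- [seq (g, g') | g <- enum_fset (supp b), g' <- enum_fset (supp b)]]
   | (q.1.2 != q.2) && (monoid.mul q.1.1.1 q.1.2 == monoid.mul q.1.1.2 q.2)].

Definition swapq (q : G * G * G * G) : G * G * G * G :=
  (q.1.1.2, q.1.1.1, q.2, q.1.2).

(* edges of U(a,b): the sets {(h,h',g,g'), (h',h,g',g)} *)
Definition ugedges (a b : grpalg) : {fset {fset (G * G * G * G)}} :=
  [fset [fset q; swapq q] | q in ugquads a b].

(* an edge containing (h,h',g,g') joins g and g'; E is incident to v *)
Definition incident (E : {fset (G * G * G * G)}) (v : G) : bool :=
  has (fun q => (q.1.2 == v) || (q.2 == v)) (enum_fset E).

(* degree of a vertex v of U(a,b) (vertex set supp b) *)
Definition ugdeg (a b : grpalg) (v : G) : nat :=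
  #|` [fset E in ugedges a b | incident E v] |.

End UnitGraph.

(* For v in supp b, let Q_v be the set of quadruples (h, h', v, g') of U(a, b).  Each edge
   at v contains exactly one of them, so deg v = |Q_v|; and such a quadruple is determined
   by the pair h <> h' of elements of supp a, as g' = h'^-1 h v, whence deg v <= n(n - 1).
   For h in supp a with h <> v^-1, the coefficient of hv in ab = 1 vanishes, so the term
   a_h b_v is cancelled by another factorisation hv = h' g': h labels a quadruple of Q_v.
   These n - 1 labels give deg v >= n - 1, with equality only if v^-1 lies in supp a without
   being a label.  Two such vertices v <> w cannot exist, since v^-1 v = w^-1 w makes
   (v^-1, w^-1, v, w) a quadruple. *)

From HB Require Import structures.
From mathcomp Require Import all_boot all_algebra monoid.
From mathcomp Require Import finmap.

Set Implicit Arguments.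
Unset Strict Implicit.
Unset Printing Implicit Defensive.

Local Open Scope fset_scope.

Definition offdiag (T : choiceType) (A : {fset T}) : seq (T * T) :=
  [seq (x, y) | x <- A, y <- A `\ x].

Lemma size_offdiag (T : choiceType) (A : {fset T}) :
  size (offdiag A) = #|` A| * (#|` A| - 1).
Proof.
rewrite size_allpairs_dep (eq_in_map _ (fun=> #|` A| - 1) _).1; last first.
  by move=> x xA; rewrite [#|` A|](cardfsD1 x) xA add1n subn1.
by rewrite sumnE big_map big_const_seq count_predT iter_addn_0 mulnC.
Qed.

Section UnitGraphDegrees.
Variables (G : groupType) (F : fieldType) (a b : grpalg G F).

Local Notation quad := (G * G * G * G)%type.

Lemma mem_ugquads (h h' g g' : G) :
  ((h, h', g, g') \in ugquads a b) =
  [&& h \in supp a, h' \in supp a, g \in supp b, g' \in supp b,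
      g != g' & (h * g == h' * g')%g].
Proof.
rewrite /ugquads mem_filter /=; apply/andP/idP.
  case=> /andP[ne e] /allpairsP[[[x y] [z w]] /=].
  case=> /allpairsP[[x' y'] /= [hx hy [-> ->]]].
  case/allpairsP=> [[z' w'] /= [hz hw [-> ->]]] [? ? ? ?]; subst.
  by rewrite hx hy hz hw ne e.
case/and5P=> ha ha' gb gb' /andP[-> ->]; split=> //.
apply/allpairsP; exists ((h, h'), (g, g')); split=> //.
  by apply/allpairsP; exists (h, h').
by apply/allpairsP; exists (g, g').
Qed.

Lemma swapqK : involutive (@swapq G).
Proof. by case=> [[[h h'] g] g']. Qed.

Lemma swapq_ugquads (q : quad) : (swapq q \in ugquads a b) = (q \in ugquads a b).
Proof.
suff imp (r : quad) : r \in ugquads a b -> swapq r \in ugquads a b.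
  by apply/idP/idP=> [/imp|/imp //]; rewrite swapqK.
case: r => [[[h h'] g] g']; rewrite !mem_ugquads.
by case/and5P=> -> -> -> -> /andP[ne /eqP e]; rewrite eq_sym ne e eqxx.
Qed.

Definition ugedge (q : quad) : {fset quad} := [fset q; swapq q].

Lemma ugedge_swapq (q : quad) : ugedge (swapq q) = ugedge q.
Proof. by rewrite /ugedge swapqK fsetUC. Qed.

Lemma incident_ugedge (q : quad) v :
  incident (ugedge q) v = (q.1.2 == v) || (q.2 == v).
Proof.
apply/hasP/idP=> [[x] | inc]; last by exists q; rewrite ?in_fset2 ?eqxx.
by rewrite in_fset2 => /orP[] /eqP -> //=; rewrite orbC.
Qed.

Definition ugquads_at (v : G) : {fset quad} := [fset q in ugquads a b | q.1.2 == v].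

Lemma mem_ugquads_at v (q : quad) :
  (q \in ugquads_at v) = (q \in ugquads a b) && (q.1.2 == v).
Proof. by rewrite !inE. Qed.

Lemma ugedge_inj_at v : {in ugquads_at v &, injective ugedge}.
Proof.
move=> q r; rewrite !mem_ugquads_at => /andP[_ /eqP qv] /andP[rQ /eqP rv] eqE.
have : q \in ugedge r by rewrite -eqE in_fset2 eqxx.
rewrite in_fset2 => /orP[/eqP // | /eqP qr].
move: qv rQ; rewrite {}qr {eqE}; case: r rv => [[[h h'] g] g'] /= -> ->.
by rewrite mem_ugquads eqxx !andbF.
Qed.

Lemma incident_ugedges_at v :
  [fset E in ugedges a b | incident E v] = ugedge @` ugquads_at v.
Proof.
apply/fsetP=> E; rewrite !inE; apply/andP/imfsetP => /=.
  case=> /imfsetP[q /= qQ ->]; rewrite incident_ugedge => /orP[qv | qv].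
    by exists q; rewrite // mem_ugquads_at qQ.
  by exists (swapq q); rewrite ?ugedge_swapq // mem_ugquads_at swapq_ugquads qQ.
case=> q; rewrite mem_ugquads_at => /andP[qQ qv] ->; split.
  by apply/imfsetP; exists q.
by rewrite incident_ugedge qv.
Qed.

Lemma ugdegE v : ugdeg a b v = #|` ugquads_at v|.
Proof. by rewrite /ugdeg incident_ugedges_at; apply/eqP/card_in_imfsetP/ugedge_inj_at. Qed.

Definition uglabels (v : G) : {fset G} := [fset q.1.1.1 | q in ugquads_at v].

Lemma uglabelsP h v :
  reflect (exists h' g', (h, h', v, g') \in ugquads a b) (h \in uglabels v).
Proof.
apply: (iffP idP) => [/imfsetP[[[[h1 h'] g] g'] /=] | [h' [g' hQ]]].
  by rewrite mem_ugquads_at => /andP[qQ /eqP /= <-] ->; exists h', g'.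
by apply/imfsetP; exists (h, h', v, g'); rewrite // mem_ugquads_at hQ /=.
Qed.

Lemma card_uglabels_le v : #|` uglabels v| <= ugdeg a b v.
Proof. by rewrite ugdegE; apply: leq_imfset_card. Qed.

Lemma ugdeg_le v : ugdeg a b v <= #|` supp a| * (#|` supp a| - 1).
Proof.
pose left_factors (q : quad) := (q.1.1.1, q.1.1.2).
have left_factors_inj : {in ugquads_at v &, injective left_factors}.
  move=> [[[h h'] g1] g1'] [[[k k'] g2] g2'].
  rewrite !mem_ugquads_at !mem_ugquads /=.
  move=> /andP[/and5P[_ _ _ _ /andP[_ /eqP e1]] /eqP g1v].
  move=> /andP[/and5P[_ _ _ _ /andP[_ /eqP e2]] /eqP g2v] [eh eh'].
  by subst; move: e1; rewrite e2 => /mulgI ->.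
rewrite ugdegE -(eqP (introT (card_in_imfsetP _ _) left_factors_inj)) -size_offdiag.
apply: uniq_leq_size (fset_uniq _) _ => _ /imfsetP[[[[h h'] g] g'] /= + ->].
rewrite mem_ugquads_at mem_ugquads => /andP[/and5P[ha ha' _ _ /andP[gg' /eqP e]] _].
apply: (@allpairs_f_dep _ (fun=> G) _ (fun x y => (x, y))) => //.
rewrite in_fsetD1 ha' andbT.
by apply: contraNneq gg' => /= h'h; apply/eqP/(mulgI h); rewrite e h'h.
Qed.

Lemma gconv_unique_factor x h g :
  h \in supp a -> g \in supp b -> (h * g)%g = x ->
  (forall h1 g1, h1 \in supp a -> g1 \in supp b -> (h1 * g1)%g = x -> h1 = h) ->
  gconv a b x = (a h * b g)%R.
Proof.
move=> ha gb hgx uniq_h.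
rewrite /gconv (bigD1_seq h) ?fset_uniq //= [X in (_ + X)%R]big1_seq ?GRing.addr0; last first.
  move=> h1 /andP[h1h h1a]; apply: big1_seq => g1 /andP[/eqP h1g1 g1b].
  by move: h1h; rewrite (uniq_h h1 g1) ?eqxx.
rewrite big_mkcond (bigD1_seq g) ?fset_uniq //= hgx eqxx big1_seq ?GRing.addr0 //.
move=> g1 /andP[g1g _]; case: ifP => // /eqP; rewrite -hgx => /mulgI g1g'.
by rewrite g1g' eqxx in g1g.
Qed.

Lemma inv_mem_uglabels v w :
  v \in supp b -> w \in supp b -> inv v \in supp a -> inv w \in supp a -> v != w ->
  inv v \in uglabels v.
Proof.
move=> vb wb iva iwa vw; apply/uglabelsP; exists (inv w), w.
by rewrite mem_ugquads iva iwa vb wb vw !mulVg eqxx.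
Qed.

Hypothesis ab1 : galg_inverse a b.

Lemma supp_neq0 : supp a != fset0.
Proof.
apply/eqP => a0; have := ab1 1%g.
by rewrite /gconv a0 big_seq_fset0 /galg1 eqxx => /eqP; rewrite eq_sym GRing.oner_eq0.
Qed.

Lemma mem_uglabels h v :
  h \in supp a -> v \in supp b -> h != inv v -> h \in uglabels v.
Proof.
move=> ha vb hv; apply/negPn/negP => nlab.
have ah : a h != 0%R by rewrite -mem_finsupp.
have bv : b v != 0%R by rewrite -mem_finsupp.
suff : gconv a b (h * v)%g = (a h * b v)%R.
  rewrite ab1 /galg1 mulg_eq1 (negbTE hv) => /esym/eqP.
  by rewrite GRing.mulf_eq0 (negbTE ah) (negbTE bv).
apply: gconv_unique_factor => // h1 g1 h1a g1b e.
apply/eqP; apply: contraNT nlab => h1h.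
apply/uglabelsP; exists h1, g1; rewrite mem_ugquads ha h1a vb g1b e eqxx andbT /=.
by apply: contraNneq h1h => vg1; rewrite -vg1 in e; rewrite (mulIg _ _ _ e).
Qed.

Lemma ugdeg_ge v : v \in supp b -> #|` supp a| - 1 <= ugdeg a b v.
Proof.
move=> vb; apply: leq_trans (card_uglabels_le v).
have sub : supp a `\ inv v `<=` uglabels v.
  by apply/fsubsetP => h; rewrite in_fsetD1 => /andP[hv ha]; apply: mem_uglabels.
apply: leq_trans (fsubset_leq_card sub).
by rewrite [#|` supp a|](cardfsD1 (inv v)) leq_subLR leq_add2r leq_b1.
Qed.

Lemma supp_sub_uglabels v : v \in supp b ->
  (inv v \in supp a -> inv v \in uglabels v) -> supp a `<=` uglabels v.
Proof.
move=> vb inv_lab; apply/fsubsetP => h ha.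
have [hv | hv] := eqVneq h (inv v); last exact: mem_uglabels.
by rewrite hv inv_lab // -hv.
Qed.

Lemma ugdeg_lt_supp v : v \in supp b -> ugdeg a b v < #|` supp a| ->
  inv v \in supp a /\ inv v \notin uglabels v.
Proof.
move=> vb lt_deg.
suff : ~~ ((inv v \in supp a) ==> (inv v \in uglabels v)) by rewrite negb_imply => /andP.
apply: contraTN lt_deg => /implyP /(supp_sub_uglabels vb) /fsubset_leq_card le_card.
by rewrite -leqNgt (leq_trans le_card) // card_uglabels_le.
Qed.

End UnitGraphDegrees.

Theorem mainTheorem9 (G : groupType) (F : fieldType) (a b : grpalg G F) (n : nat) :
  #|` supp a| = n ->
  galg_inverse a b ->
  (forall v, v \in supp b -> (n - 1 <= ugdeg a b v <= n * (n - 1))%N) /\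
  (forall v w, v \in supp b -> w \in supp b ->
     ugdeg a b v = (n - 1)%N -> ugdeg a b w = (n - 1)%N -> v = w).
Proof.
move=> <- ab1; split=> [v vb | v w vb wb dv dw].
  by rewrite ugdeg_ge // ugdeg_le.
have n_gt0 : 0 < #|` supp a| by rewrite cardfs_gt0 (supp_neq0 ab1).
have lt_n u : ugdeg a b u = #|` supp a| - 1 -> ugdeg a b u < #|` supp a|.
  by move=> ->; rewrite subn1 ltn_predL.
have [iva nlab] := ugdeg_lt_supp ab1 vb (lt_n v dv).
have [iwa _] := ugdeg_lt_supp ab1 wb (lt_n w dw).
by apply/eqP; apply: contraNT nlab; apply: inv_mem_uglabels.
Qed.
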